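(* Let $H:\mathbb{R}/\mathbb{Z}\times\mathbb{D}\to\mathbb{R}$ be smooth, vanishing on $\mathbb{R}/\mathbb{Z}\times\partial\mathbb{D}$, generating the symplectic isotopy $\tilde\varphi$, and suppose that the Hamiltonian vector field $X_{H^t}$ restricted to $\partial\mathbb{D}$ is independent of $t$ and that the rotation number on the boundary satisfies $|\rho(\tilde\varphi|_{\partial\mathbb{D}})|<1$. Let $H_n$ be defined, in polar coordinates $(r,\theta)$, by $H_n(t,1+r,\theta)=H(t,1+\rho_n(r),\theta)$ (with $H_n=H$ on $\mathbb{D}$), where $H$ also denotes a fixed smooth extension of $H$ to $\mathbb{R}/\mathbb{Z}\times\mathbb{R}^2$ and $\rho_n:\mathbb{R}\to\mathbb{R}$ are smooth functions with $\rho_n(r)=r$ for $r\le0$, $\rho_n(r)=0$ for $r\ge1/n$, and on $r\ge0$: $\rho_n\ge0$, $|\rho_n'|\le1$, $|\rho_n|\le1/n$, together with $\rho_n'(r)\ge-1/n$ for all $r$. Then for all sufficiently large $n$, every trajectory $x_n:[0,1]\to\mathbb{R}^2$ of $X_{H_n}$ whose image lies in $\mathbb{R}^2\setminus\dot{\mathbb{D}}$ satisfies $|\mathrm{wind}(x_n)|<1$.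
   Context: $\mathbb{D}\subset\mathbb{R}^2$ is the closed unit disc, $\dot{\mathbb{D}}$ its interior, $\omega=dx\wedge dy$. Hamiltonian vector fields are defined by $\iota_{X_{H^t}}\omega=dH^t$, and $\tilde\varphi=\{\varphi_t\}$ is the flow $\frac{d}{dt}\varphi_t=X_{H^t}\circ\varphi_t$, $\varphi_0=\mathrm{id}$, which preserves $\mathbb{D}$. The rotation number $\rho(\tilde\varphi|_{\partial\mathbb{D}})$ is the rotation number (in full turns) of the lift of $\varphi_1|_{\partial\mathbb{D}}$ determined by the isotopy. If $x(t)=r(t)e^{i\theta(t)}$ with $\theta$ continuous, then $\mathrm{wind}(x)=(\theta(1)-\theta(0))/2\pi$. *)

From Stdlib Require Import Reals Lra.
From Coquelicot Require Import Coquelicot.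
Open Scope R_scope.

(** Points of R^2 are pairs (x, y); a time-dependent function on R^2 is
    written H : R -> R -> R -> R, as H t x y. *)

Definition rad (x y : R) : R := sqrt (x ^ 2 + y ^ 2).

Definition continuous3 (f : R -> R -> R -> R) : Prop :=
  forall t x y,
    continuous (fun p : R * R * R => f (fst (fst p)) (snd (fst p)) (snd p)) (t, x, y).

Definition d_t (f : R -> R -> R -> R) : R -> R -> R -> R :=
  fun t x y => Derive (fun s => f s x y) t.
Definition d_x (f : R -> R -> R -> R) : R -> R -> R -> R :=
  fun t x y => Derive (fun s => f t s y) x.
Definition d_y (f : R -> R -> R -> R) : R -> R -> R -> R :=
  fun t x y => Derive (fun s => f t x s) y.

Fixpoint Ck3 (k : nat) (f : R -> R -> R -> R) : Prop :=
  match k with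
  | O => continuous3 f
  | S k' =>
      continuous3 f /\
      (forall t x y, ex_derive (fun s => f s x y) t /\
                     ex_derive (fun s => f t s y) x /\
                     ex_derive (fun s => f t x s) y) /\
      Ck3 k' (d_t f) /\ Ck3 k' (d_x f) /\ Ck3 k' (d_y f)
  end.

Definition smooth3 (f : R -> R -> R -> R) : Prop := forall k, Ck3 k f.

Definition smooth1 (f : R -> R) : Prop := forall k x, ex_derive_n f k x.

(** Hamiltonian vector field: iota_X (dx /\ dy) = dH gives X = (dH/dy, -dH/dx). *)
Definition XH1 (H : R -> R -> R -> R) (t x y : R) : R := d_y H t x y.
Definition XH2 (H : R -> R -> R -> R) (t x y : R) : R := - d_x H t x y.

Definition cont_on01 (f : R -> R) : Prop :=
  forall t, 0 <= t <= 1 -> forall eps, 0 < eps ->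
    exists d, 0 < d /\ forall s, 0 <= s <= 1 -> Rabs (s - t) < d ->
      Rabs (f s - f t) < eps.

(** x = (x1, x2) : [0,1] -> R^2 is a trajectory of X_H: continuous on [0,1],
    and x' = X_{H^t}(x) on (0,1) (this class contains all classical
    trajectories on [0,1]). *)
Definition trajectory01 (H : R -> R -> R -> R) (x1 x2 : R -> R) : Prop :=
  cont_on01 x1 /\ cont_on01 x2 /\
  forall t, 0 < t < 1 ->
    is_derive x1 t (XH1 H t (x1 t) (x2 t)) /\
    is_derive x2 t (XH2 H t (x1 t) (x2 t)).

Definition is_wind (x1 x2 : R -> R) (w : R) : Prop :=
  exists theta : R -> R, cont_on01 theta /\
    (forall t, 0 <= t <= 1 ->
       x1 t = rad (x1 t) (x2 t) * cos (theta t) /\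
       x2 t = rad (x1 t) (x2 t) * sin (theta t)) /\
    w = (theta 1 - theta 0) / (2 * PI).

(** Rotation number (in full turns) of the lift of phi_1 restricted to the
    boundary circle determined by the isotopy.  Since H is 1-periodic,
    phi_n = (phi_1)^n, so F^n(a) - a (F the lift) is the angular displacement
    (in turns) of the isotopy trajectory on [0,n]; the rotation number is the
    limit of (F^n(a) - a)/n. *)
Definition is_boundary_rotation_number (H : R -> R -> R -> R) (rho : R) : Prop :=
  forall (y1 y2 theta : R -> R),
    (forall t, is_derive y1 t (XH1 H t (y1 t) (y2 t)) /\
               is_derive y2 t (XH2 H t (y1 t) (y2 t))) ->
    (forall t, continuous theta t) ->
    (forall t, y1 t = cos (theta t) /\ y2 t = sin (theta t)) ->
    is_lim_seq (fun n : nat => (theta (INR n) - theta 0) / (2 * PI * INR n)) rho.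

Definition Hn (rhon : R -> R) (H : R -> R -> R -> R) : R -> R -> R -> R :=
  fun t x y =>
    let r := rad x y in
    if Rle_dec r 1 then H t x y
    else let c := (1 + rhon (r - 1)) / r in H t (c * x) (c * y).

From Stdlib Require Import Reals.
From Coquelicot Require Import Coquelicot.
Open Scope R_scope.
From Stdlib Require Import Lra Lia Classical ClassicalEpsilon Ranalysis5.

(* Because H vanishes on the unit circle, X_H is tangent to it and the boundary
   flow is the autonomous circle flow th' = f th, where f th = - d_r H (e^{i th}).
   Outside the disc, X_{H_n} is X_H pulled back by the radial map
   r |-> 1 + rho_n (r - 1); as |rho_n'| <= 1, 0 <= rho_n <= 1/n and dH is uniformly
   continuous near the circle, for large n the angular velocity of an H_n-trajectory
   in |x| >= 1 is at most g th = |f th| + dl.  So the travel time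
   G th = int_0^th du / g u moves by at most 1 along the trajectory, which therefore
   winds less than once as soon as G (2 PI) > 1.  Such a dl > 0 exists: if f has a
   zero, f is Lipschitz there and int du / (|f| + dl) grows like ln (1 / dl);
   otherwise f has a sign, the boundary flow has period P = int du / |f| and
   rotation number +-1/P, so |rho| < 1 forces P > 1, which survives a small dl. *)

Lemma Rabs_sub_le_sum a b c : Rabs (a - b) <= Rabs (a - c) + Rabs (b - c).
Proof.
  replace (a - b) with ((a - c) + - (b - c)) by ring.
  eapply Rle_trans; [apply Rabs_triang|]. rewrite Rabs_Ropp. lra.
Qed.

Lemma continuous3_ball (F : R -> R -> R -> R) t x y eps : continuous3 F -> 0 < eps ->
  exists d, 0 < d /\ forall t' x' y',
    Rabs (t' - t) < d -> Rabs (x' - x) < d -> Rabs (y' - y) < d ->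
    Rabs (F t' x' y' - F t x y) < eps.
Proof.
  intros HF Heps.
  destruct (HF t x y _ (locally_ball (F t x y) (mkposreal eps Heps))) as [d Hd].
  exists d. split; [apply cond_pos|].
  intros t' x' y' Ht Hx Hy. exact (Hd (t', x', y') (conj (conj Ht Hx) Hy)).
Qed.

Lemma continuity_pt_on_circle (F : R -> R -> R -> R) t th : continuous3 F ->
  continuity_pt (fun u => F t (cos u) (sin u)) th.
Proof.
  intros HF. apply continuity_pt_locally. intros eps.
  destruct (continuous3_ball F t (cos th) (sin th) eps HF (cond_pos eps)) as [d [Hd HFd]].
  assert (Hc := proj1 (continuity_pt_locally cos th) (continuity_cos th) (mkposreal d Hd)).
  assert (Hs := proj1 (continuity_pt_locally sin th) (continuity_sin th) (mkposreal d Hd)).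
  generalize (filter_and _ _ Hc Hs). apply filter_imp. intros u [Hcu Hsu].
  apply HFd; auto. rewrite Rminus_diag, Rabs_R0; exact Hd.
Qed.

Lemma continuous3_unif_cube (F : R -> R -> R -> R) a b eps : continuous3 F -> 0 < eps ->
  exists eta, 0 < eta /\ forall t x y t' x' y',
    a <= t <= b -> a <= x <= b -> a <= y <= b ->
    Rabs (t' - t) < eta -> Rabs (x' - x) < eta -> Rabs (y' - y) < eta ->
    Rabs (F t' x' y' - F t x y) < eps.
Proof.
  intros HF Heps.
  assert (Hmod : forall z1 z2 z3 : R, {d : R | 0 < d /\ forall t' x' y',
     Rabs (t' - z1) < d -> Rabs (x' - z2) < d -> Rabs (y' - z3) < d ->
     Rabs (F t' x' y' - F z1 z2 z3) < eps / 2}).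
  { intros z1 z2 z3. apply constructive_indefinite_description.
    apply continuous3_ball; [exact HF | lra]. }
  (* a Lebesgue number for the cover by the balls of radius [modulus z / 2] *)
  set (modulus := fun z : Compactness.Tn 3 R =>
    let '(z1, (z2, (z3, _))) := z in proj1_sig (Hmod z1 z2 z3)).
  assert (Hpos : forall z, 0 < modulus z / 2).
  { intros [z1 [z2 [z3 []]]]. simpl. destruct (Hmod z1 z2 z3) as [d Hd]. simpl. lra. }
  destruct (compactness_value 3 (a, (a, (a, tt))) (b, (b, (b, tt)))
              (fun z => mkposreal _ (Hpos z))) as [d Hd].
  exists d. split; [apply cond_pos|].
  intros t x y t' x' y' Ht Hx Hy H1 H2 H3.
  apply Rnot_le_lt. intro Hcon.
  apply (Hd (t, (x, (y, tt)))); [simpl; tauto|].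
  intros [z [_ [Hzc Hdz]]]. destruct z as [z1 [z2 [z3 []]]].
  destruct Hzc as [C1 [C2 [C3 _]]]. simpl in C1, C2, C3, Hdz.
  destruct (Hmod z1 z2 z3) as [r [Hr0 Hr]]. simpl in C1, C2, C3, Hdz.
  assert (A1 : Rabs (F t x y - F z1 z2 z3) < eps / 2) by (apply Hr; lra).
  assert (A2 : Rabs (F t' x' y' - F z1 z2 z3) < eps / 2).
  { rewrite <- Rabs_Ropp, Ropp_minus_distr in C1, C2, C3.
    apply Hr; [ pose proof (Rabs_sub_le_sum t' z1 t)
              | pose proof (Rabs_sub_le_sum x' z2 x)
              | pose proof (Rabs_sub_le_sum y' z3 y) ]; lra. }
  pose proof (Rabs_sub_le_sum (F t' x' y') (F t x y) (F z1 z2 z3)). lra.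
Qed.

Lemma ex_derive_continuity_pt (f : R -> R) x : ex_derive f x -> continuity_pt f x.
Proof.
  intros Hf. apply continuity_pt_filterlim.
  exact (ex_derive_continuous (K := R_AbsRing) (V := R_NormedModule) f x Hf).
Qed.

Lemma MVT_affine_bound (h : R -> R) (a b l e : R) :
  (forall s, ex_derive h s) ->
  (forall c, Rmin a b <= c <= Rmax a b -> Rabs (Derive h c - l) <= e) ->
  Rabs (h b - h a - l * (b - a)) <= e * Rabs (b - a).
Proof.
  intros Hd Hb.
  destruct (MVT_gen h a b (Derive h)) as [c [Hc Heq]].
  - intros; apply Derive_correct; auto.
  - intros x _. apply ex_derive_continuity_pt; auto.
  - rewrite Heq.
    replace (Derive h c * (b - a) - l * (b - a)) with ((Derive h c - l) * (b - a)) by ring.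
    rewrite Rabs_mult. apply Rmult_le_compat_r; [apply Rabs_pos | auto].
Qed.

Lemma differentiable_pt_lim_of_partials (g : R -> R -> R) x y :
  (forall u v, ex_derive (fun s => g s v) u) ->
  (forall u v, ex_derive (fun s => g u s) v) ->
  (forall eps, 0 < eps -> exists d, 0 < d /\ forall u v, Rabs (u - x) < d -> Rabs (v - y) < d ->
     Rabs (Derive (fun s => g s v) u - Derive (fun s => g s y) x) < eps /\
     Rabs (Derive (fun s => g u s) v - Derive (fun s => g x s) y) < eps) ->
  differentiable_pt_lim g x y (Derive (fun s => g s y) x) (Derive (fun s => g x s) y).
Proof.
  intros H1 H2 Hc eps.
  destruct (Hc (eps / 2)) as [d [Hd0 Hd]]; [pose proof (cond_pos eps); lra|].
  exists (mkposreal d Hd0). simpl. intros u v Hu Hv.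
  set (lx := Derive (fun s => g s y) x). set (ly := Derive (fun s => g x s) y).
  assert (Hx : Rabs (g u v - g x v - lx * (u - x)) <= eps / 2 * Rabs (u - x)).
  { apply (MVT_affine_bound (fun s => g s v)); [auto|]. intros c Hc'.
    apply Rlt_le, (Hd c v); auto.
    apply Rle_lt_trans with (2 := Hu), Rabs_le_between_min_max.
    rewrite Rmin_comm, Rmax_comm; exact Hc'. }
  assert (Hy : Rabs (g x v - g x y - ly * (v - y)) <= eps / 2 * Rabs (v - y)).
  { apply (MVT_affine_bound (fun s => g x s)); [auto|]. intros c Hc'.
    apply Rlt_le, (Hd x c); [rewrite Rminus_diag, Rabs_R0; lra|].
    apply Rle_lt_trans with (2 := Hv), Rabs_le_between_min_max.
    rewrite Rmin_comm, Rmax_comm; exact Hc'. }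
  replace (g u v - g x y - (lx * (u - x) + ly * (v - y))) with
    ((g u v - g x v - lx * (u - x)) + (g x v - g x y - ly * (v - y))) by ring.
  eapply Rle_trans; [apply Rabs_triang|].
  assert (Hux : eps / 2 * Rabs (u - x) <= eps / 2 * Rmax (Rabs (u - x)) (Rabs (v - y)))
    by (apply Rmult_le_compat_l; [pose proof (cond_pos eps); lra | apply Rmax_l]).
  assert (Hvy : eps / 2 * Rabs (v - y) <= eps / 2 * Rmax (Rabs (u - x)) (Rabs (v - y)))
    by (apply Rmult_le_compat_l; [pose proof (cond_pos eps); lra | apply Rmax_r]).
  lra.
Qed.

Lemma Ck3_pred k f : Ck3 (S k) f -> Ck3 k f.
Proof.
  revert f. induction k as [|k IH]; intros f Hf.
  - exact (proj1 Hf).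
  - destruct Hf as [Hc [He [Ht [Hx Hy]]]].
    exact (conj Hc (conj He (conj (IH _ Ht) (conj (IH _ Hx) (IH _ Hy))))).
Qed.

Lemma Ck3_1_differentiable (F : R -> R -> R -> R) t x y : Ck3 1 F ->
  differentiable_pt_lim (F t) x y (d_x F t x y) (d_y F t x y).
Proof.
  intros [_ [Hex [_ [Hx Hy]]]].
  apply (differentiable_pt_lim_of_partials (F t) x y).
  { intros u v. exact (proj1 (proj2 (Hex t u v))). }
  { intros u v. exact (proj2 (proj2 (Hex t u v))). }
  intros eps Heps.
  destruct (continuous3_ball _ t x y eps Hx Heps) as [d1 [Hd1 H1]].
  destruct (continuous3_ball _ t x y eps Hy Heps) as [d2 [Hd2 H2]].
  exists (Rmin d1 d2). split; [apply Rmin_pos; auto|].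
  intros u v Hu Hv.
  pose proof (Rmin_l d1 d2). pose proof (Rmin_r d1 d2).
  split; [apply (H1 t u v) | apply (H2 t u v)]; rewrite ?Rminus_diag, ?Rabs_R0; lra.
Qed.

Lemma is_derive_on_circle (G : R -> R -> R) th gx gy :
  differentiable_pt_lim G (cos th) (sin th) gx gy ->
  is_derive (fun s => G (cos s) (sin s)) th (gx * (- sin th) + gy * cos th).
Proof.
  intros HG. apply is_derive_Reals.
  apply (derivable_pt_lim_comp_2d G cos sin th gx gy (- sin th) (cos th) HG).
  - apply derivable_pt_lim_cos.
  - apply derivable_pt_lim_sin.
Qed.

Lemma is_derive_pos_lt (F dF : R -> R) : (forall x, is_derive F x (dF x)) -> (forall x, 0 < dF x) ->
  forall x y, x < y -> F x < F y.
Proof.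
  intros HF Hp x y Hxy.
  destruct (MVT_gen F x y dF) as [c [_ Hc]].
  - intros; apply HF.
  - intros z _. apply ex_derive_continuity_pt. eexists; apply HF.
  - pose proof (Hp c). assert (0 < dF c * (y - x)) by (apply Rmult_lt_0_compat; lra). lra.
Qed.

Lemma is_derive_inverse (F Fi dF : R -> R) :
  (forall x, is_derive F x (dF x)) -> (forall x, 0 < dF x) ->
  (forall t, F (Fi t) = t) -> forall t, is_derive Fi t (/ dF (Fi t)).
Proof.
  intros HF Hp HFi t.
  assert (Hinc := is_derive_pos_lt F dF HF Hp).
  assert (HFiF : forall x, Fi (F x) = x).
  { intros x. destruct (Rtotal_order (Fi (F x)) x) as [H | [H | H]]; auto;
      apply Hinc in H; rewrite HFi in H; lra. }
  assert (Hmon : forall a b, a <= b -> Fi a <= Fi b).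
  { intros a b Hab. apply Rnot_lt_le. intros H. apply Hinc in H. rewrite !HFi in H. lra. }
  assert (HcFi : continuity_pt Fi t).
  { apply (continuity_pt_recip_interv F Fi (Fi t - 1) (Fi t + 1)); [lra | | | | |].
    - intros x y _ Hxy _. apply Hinc, Hxy.
    - intros x _ _. apply HFi.
    - intros x H1 H2. apply Hmon in H1. apply Hmon in H2. rewrite HFiF in H1, H2. lra.
    - intros a _. apply ex_derive_continuity_pt. eexists; apply HF.
    - rewrite <- (HFi t) at 2 3. split; apply Hinc; lra. }
  assert (Prf : forall a, Fi (t - 1) <= a <= Fi (t + 1) -> derivable_pt F a).
  { intros a _. apply ex_derive_Reals_0. eexists; apply HF. }
  assert (Hincr : Fi (t - 1) <= Fi t <= Fi (t + 1)) by (split; apply Hmon; lra).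
  assert (HD := derivable_pt_lim_recip_interv F Fi (t - 1) (t + 1) t Prf HcFi
     ltac:(lra) ltac:(lra) Hincr).
  rewrite (derive_pt_eq_0 F (Fi t) (dF (Fi t)) _ (proj1 (is_derive_Reals _ _ _) (HF _))) in HD.
  apply is_derive_Reals. unfold Rdiv in HD. rewrite Rmult_1_l in HD.
  apply HD; [intros x _; apply HFi | apply Rgt_not_eq, Hp].
Qed.

Lemma sign_constant (f : R -> R) : (forall x, continuity_pt f x) -> (forall x, f x <> 0) ->
  (forall x, 0 < f x) \/ (forall x, f x < 0).
Proof.
  intros Hc Hnz.
  assert (Hsame : forall a, 0 < f 0 -> 0 < f a).
  { intros a H0. apply Rnot_le_lt. intros Ha.
    destruct (IVT_gen f 0 a 0 Hc) as [x [_ Hx]]; [|exact (Hnz x Hx)].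
    rewrite Rmin_right, Rmax_left; lra. }
  assert (Hsame' : forall a, f 0 < 0 -> f a < 0).
  { intros a H0. apply Rnot_le_lt. intros Ha.
    destruct (IVT_gen f 0 a 0 Hc) as [x [_ Hx]]; [|exact (Hnz x Hx)].
    rewrite Rmin_left, Rmax_right; lra. }
  destruct (Rtotal_order (f 0) 0) as [H | [H | H]]; [right | exfalso | left]; eauto.
  exact (Hnz 0 H).
Qed.

Lemma is_lim_seq_of_rate (u : nat -> R) (l C : R) : 0 <= C ->
  (forall n, (1 <= n)%nat -> Rabs (u n - l) <= C / INR n) -> is_lim_seq u l.
Proof.
  intros HC Hb. apply is_lim_seq_spec. intros eps.
  pose proof (cond_pos eps) as Heps.
  destruct (nfloor_ex (C / eps)) as [N [_ HN]]; [apply Rdiv_le_0_compat; auto|].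
  exists (S N). intros n Hn.
  apply Rle_lt_trans with (1 := Hb n ltac:(lia)).
  apply le_INR in Hn. rewrite S_INR in Hn.
  assert (HnP : 0 < INR n) by (pose proof (pos_INR N); lra).
  apply (Rmult_lt_reg_r (INR n)); [exact HnP|].
  replace (C / INR n * INR n) with C by (field; lra).
  replace C with (eps * (C / eps)) by (field; lra).
  apply Rmult_lt_compat_l; lra.
Qed.

Lemma eventually_inv_INR_lt eta : 0 < eta ->
  exists N, forall n, (N <= n)%nat -> (1 <= n)%nat /\ / INR n < eta.
Proof.
  intros Heta.
  destruct (nfloor_ex (/ eta)) as [N [_ HN]]; [left; apply Rinv_0_lt_compat, Heta|].
  exists (S N). intros n Hn. split; [lia|].
  apply le_INR in Hn. rewrite S_INR in Hn.
  rewrite <- (Rinv_inv eta). apply Rinv_lt_contravar; [|lra].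
  apply Rmult_lt_0_compat; [apply Rinv_0_lt_compat, Heta | pose proof (pos_INR N); lra].
Qed.

Lemma Rabs_le_linear_near_root (f df : R -> R) x0 :
  (forall x, is_derive f x (df x)) -> continuity_pt df x0 -> f x0 = 0 ->
  exists L eta, 0 < L /\ 0 < eta <= 1 /\
    forall u, x0 <= u <= x0 + eta -> Rabs (f u) <= L * (u - x0).
Proof.
  intros Hd Hc Hz.
  destruct (proj1 (continuity_pt_locally df x0) Hc (mkposreal 1 Rlt_0_1)) as [d Hdf].
  exists (Rabs (df x0) + 1), (Rmin (d / 2) 1).
  pose proof (cond_pos d). pose proof (Rmin_l (d / 2) 1). pose proof (Rmin_r (d / 2) 1).
  assert (0 < Rmin (d / 2) 1) by (apply Rmin_pos; lra).
  split; [pose proof (Rabs_pos (df x0)); lra | split; [lra|]].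
  intros u Hu.
  destruct (MVT_gen f x0 u df) as [c [Hc1 Hc2]]; [intros; apply Hd | |].
  - intros x _. apply ex_derive_continuity_pt. eexists. apply Hd.
  - rewrite Hz, Rminus_0_r in Hc2. rewrite Hc2, Rabs_mult, (Rabs_right (u - x0)) by lra.
    apply Rmult_le_compat_r; [lra|].
    rewrite Rmin_left, Rmax_right in Hc1 by lra.
    assert (Hball : Rabs (df c - df x0) < 1).
    { apply (Hdf c). change (Rabs (c - x0) < d). rewrite Rabs_right; lra. }
    pose proof (Rabs_sub_le_sum (df c) 0 (df x0)). rewrite Rminus_0_r, Rminus_0_l, Rabs_Ropp in *.
    lra.
Qed.

(* Composing with [clamp01] extends a function continuous on [0, 1] to one continuous on R. *)
Definition clamp01 (t : R) : R := Rmax 0 (Rmin 1 t).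

Lemma clamp01_range t : 0 <= clamp01 t <= 1.
Proof.
  unfold clamp01. split; [apply Rmax_l|].
  apply Rmax_lub; [lra | apply Rmin_l].
Qed.

Lemma clamp01_lipschitz s t : Rabs (clamp01 s - clamp01 t) <= Rabs (s - t).
Proof.
  unfold clamp01, Rmax, Rmin.
  repeat destruct Rle_dec; unfold Rabs; repeat destruct Rcase_abs; lra.
Qed.

Lemma clamp01_locally_id t : 0 < t < 1 -> locally t (fun s => clamp01 s = s).
Proof.
  intros Ht. assert (Hd : 0 < Rmin t (1 - t)) by (apply Rmin_pos; lra).
  exists (mkposreal _ Hd).
  intros s Hs. change (Rabs (s - t) < Rmin t (1 - t)) in Hs.
  pose proof (Rmin_l t (1 - t)). pose proof (Rmin_r t (1 - t)).
  apply Rabs_lt_between' in Hs.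
  unfold clamp01. rewrite Rmin_right, Rmax_right; lra.
Qed.

Lemma cont_on01_clamp (f : R -> R) t : cont_on01 f -> continuity_pt (fun s => f (clamp01 s)) t.
Proof.
  intros Hf. apply continuity_pt_locally. intros eps.
  destruct (Hf (clamp01 t) (clamp01_range t) eps (cond_pos eps)) as [d [Hd Hfd]].
  exists (mkposreal d Hd). intros s Hs. apply Hfd; [apply clamp01_range|].
  exact (Rle_lt_trans _ _ _ (clamp01_lipschitz s t) Hs).
Qed.

Lemma cont_on01_continuity_pt (f : R -> R) t : cont_on01 f -> 0 < t < 1 -> continuity_pt f t.
Proof.
  intros Hf Ht. apply (continuity_pt_ext_loc (fun s => f (clamp01 s))).
  - apply filter_imp with (2 := clamp01_locally_id t Ht). intros s ->. reflexivity.
  - apply cont_on01_clamp, Hf.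
Qed.

Lemma cont_on01_comp (G f : R -> R) : (forall x, continuity_pt G x) -> cont_on01 f ->
  cont_on01 (fun t => G (f t)).
Proof.
  intros HG Hf t Ht eps Heps.
  destruct (proj1 (continuity_pt_locally G (f t)) (HG (f t)) (mkposreal eps Heps)) as [d1 Hd1].
  destruct (Hf t Ht d1 (cond_pos d1)) as [d2 [Hd2 Hfd]].
  exists d2. split; [exact Hd2|]. intros s Hs Hst. apply (Hd1 (f s)), Hfd; assumption.
Qed.

Lemma MVT_cont_on01 (Phi dPhi : R -> R) : cont_on01 Phi ->
  (forall t, 0 < t < 1 -> is_derive Phi t (dPhi t)) ->
  exists c, 0 < c < 1 /\ Phi 1 - Phi 0 = dPhi c.
Proof.
  intros Hc Hd.
  set (P := fun s => Phi (clamp01 s)).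
  assert (HdP : forall c, 0 < c < 1 -> is_derive P c (dPhi c)).
  { intros c Hc1. apply (is_derive_ext_loc Phi); [|exact (Hd c Hc1)].
    apply filter_imp with (2 := clamp01_locally_id c Hc1).
    intros s E. unfold P. rewrite E. reflexivity. }
  assert (pr : forall c, 0 < c < 1 -> derivable_pt P c).
  { intros c Hc1. exists (dPhi c). apply is_derive_Reals, HdP, Hc1. }
  destruct (MVT P id 0 1 pr (fun c _ => derivable_pt_id c) Rlt_0_1
              (fun c _ => cont_on01_clamp Phi c Hc) (fun c _ => continuity_pt_id c)) as [c [Hc1 E]].
  exists c. split; [exact Hc1|].
  rewrite derive_pt_id, (derive_pt_eq_0 P c (dPhi c) (pr c Hc1)) in E
    by apply is_derive_Reals, HdP, Hc1.
  unfold P, id, clamp01 in E. rewrite Rmin_left, Rmax_right, Rmin_right, Rmax_left in E by lra.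
  lra.
Qed.

(** * Polar coordinates *)

Lemma rad_sqr x y : rad x y ^ 2 = x ^ 2 + y ^ 2.
Proof. unfold rad. rewrite <- Rsqr_pow2. apply Rsqr_sqrt. nra. Qed.

Lemma rad_ge_0 x y : 0 <= rad x y.
Proof. apply sqrt_pos. Qed.

Lemma rad_comm x y : rad x y = rad y x.
Proof. unfold rad. f_equal. ring. Qed.

Lemma rad_circle th : rad (cos th) (sin th) = 1.
Proof.
  unfold rad. rewrite <- sqrt_1. f_equal.
  pose proof (sin2_cos2 th). unfold Rsqr in *. lra.
Qed.

Lemma rad_pos_of_near x y s : 1 <= rad x y -> Rabs (s - x) < 1 / 2 -> 0 < rad s y.
Proof.
  intros Hr Hs. apply Rnot_le_lt. intros Hle.
  assert (E : s ^ 2 + y ^ 2 = 0).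
  { rewrite <- rad_sqr. replace (rad s y) with 0; [ring | pose proof (rad_ge_0 s y); lra]. }
  assert (s = 0 /\ y = 0) as [-> ->] by nra.
  assert (Hx : rad x 0 ^ 2 = x ^ 2) by (rewrite rad_sqr; ring).
  rewrite Rminus_0_l, Rabs_Ropp in Hs.
  assert (1 <= x ^ 2) by nra.
  assert (Rabs x ^ 2 = x ^ 2) by (rewrite <- Rsqr_pow2, <- Rsqr_abs, Rsqr_pow2; reflexivity).
  pose proof (Rabs_pos x). nra.
Qed.

Lemma is_derive_rad_x x y : 0 < rad x y -> is_derive (fun s => rad s y) x (x / rad x y).
Proof.
  intros Hr. assert (Hsq : 0 < x ^ 2 + y ^ 2) by (rewrite <- rad_sqr; nra).
  unfold rad in *. auto_derive; [lra|].
  replace (x * (x * 1) + y * (y * 1)) with (x ^ 2 + y ^ 2) by ring. field. lra.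
Qed.

Lemma is_derive_rad_y x y : 0 < rad x y -> is_derive (fun s => rad x s) y (y / rad x y).
Proof.
  intros Hr. rewrite rad_comm in *.
  apply (is_derive_ext (fun s => rad s x)); [intros; apply rad_comm | apply is_derive_rad_x, Hr].
Qed.

Lemma is_derive_polar_angle (x1 x2 th : R -> R) t a1 a2 :
  is_derive x1 t a1 -> is_derive x2 t a2 -> continuity_pt th t ->
  locally t (fun s => 0 < rad (x1 s) (x2 s) /\
    x1 s = rad (x1 s) (x2 s) * cos (th s) /\ x2 s = rad (x1 s) (x2 s) * sin (th s)) ->
  is_derive th t ((x1 t * a2 - x2 t * a1) / rad (x1 t) (x2 t) ^ 2).
Proof.
  intros H1 H2 Hc Hrep.
  set (c0 := cos (th t)). set (s0 := sin (th t)).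
  set (u := fun s => x1 s * c0 + x2 s * s0).
  set (v := fun s => - x1 s * s0 + x2 s * c0).
  destruct (locally_singleton _ _ Hrep) as [Hr [E1 E2]].
  set (r := rad (x1 t) (x2 t)) in *.
  assert (Hcs : c0 ^ 2 + s0 ^ 2 = 1).
  { pose proof (sin2_cos2 (th t)) as E. fold c0 s0 in E. unfold Rsqr in E. lra. }
  assert (Hu : u t = r).
  { unfold u. rewrite E1, E2. fold c0 s0. rewrite <- (Rmult_1_r r) at 3. rewrite <- Hcs. ring. }
  assert (Hv : v t = 0) by (unfold v; rewrite E1, E2; fold c0 s0; ring).
  (* near t, th = th t + atan (v / u): (u, v) is x rotated by -th t, and by continuity
     th - th t stays in (-PI/2, PI/2) *)
  assert (HPI2 : 0 < PI / 2) by (pose proof PI_RGT_0; lra).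
  assert (Hth := proj1 (continuity_pt_locally th t) Hc (mkposreal _ HPI2)).
  assert (Hloc : locally t (fun s => th t + atan (v s / u s) = th s)).
  { generalize (filter_and _ _ Hrep Hth). apply filter_imp.
    intros s [[Hrs [F1 F2]] Hs]. simpl in Hs.
    set (al := th s - th t). set (rs := rad (x1 s) (x2 s)) in *.
    assert (Hal : - (PI / 2) < al < PI / 2) by (apply Rabs_lt_between; exact Hs).
    assert (Hcal : 0 < cos al) by (apply cos_gt_0; lra).
    assert (Hus : u s = rs * cos al).
    { unfold u, al. rewrite cos_minus, F1, F2. fold c0 s0. ring. }
    assert (Hvs : v s = rs * sin al).
    { unfold v, al. rewrite sin_minus, F1, F2. fold c0 s0. ring. }
    replace (v s / u s) with (tan al).
    - rewrite atan_tan by lra. unfold al. ring.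
    - rewrite Hus, Hvs. unfold tan. field. lra. }
  eapply is_derive_ext_loc; [exact Hloc|].
  unfold u, v in *. auto_derive.
  - repeat split; try (eexists; eassumption). lra.
  - replace (Derive (fun x => x1 x) t) with a1 by (symmetry; apply is_derive_unique, H1).
    replace (Derive (fun x => x2 x) t) with a2 by (symmetry; apply is_derive_unique, H2).
    rewrite Hu, Hv, E1, E2.
    fold c0 s0. field. lra.
Qed.

Lemma Rabs_div_2PI_lt_1 x : Rabs x < 2 * PI -> Rabs (x / (2 * PI)) < 1.
Proof.
  intros Hx. pose proof PI_RGT_0.
  unfold Rdiv. rewrite Rabs_mult, Rabs_inv, (Rabs_right (2 * PI)) by lra.
  apply (Rmult_lt_reg_r (2 * PI)); [lra|]. rewrite Rmult_assoc, Rinv_l by lra. lra.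
Qed.

Definition angular_velocity (G : R -> R -> R -> R) (t X Y : R) : R :=
  (X * XH2 G t X Y - Y * XH1 G t X Y) / rad X Y ^ 2.

Lemma trajectory_angle_is_derive (G : R -> R -> R -> R) (x1 x2 th : R -> R) :
  trajectory01 G x1 x2 -> (forall t, 0 <= t <= 1 -> 0 < rad (x1 t) (x2 t)) -> cont_on01 th ->
  (forall t, 0 <= t <= 1 ->
     x1 t = rad (x1 t) (x2 t) * cos (th t) /\ x2 t = rad (x1 t) (x2 t) * sin (th t)) ->
  forall t, 0 < t < 1 -> is_derive th t (angular_velocity G t (x1 t) (x2 t)).
Proof.
  intros [_ [_ Hder]] Hrad Hth Hrep t Ht.
  destruct (Hder t Ht) as [D1 D2].
  apply is_derive_polar_angle; [exact D1 | exact D2 | apply cont_on01_continuity_pt; assumption|].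
  apply filter_imp with (2 := clamp01_locally_id t Ht). intros s Hs.
  assert (0 <= s <= 1) by (rewrite <- Hs; apply clamp01_range).
  split; [apply Hrad | apply Hrep]; assumption.
Qed.

(** * Travel time of a positive periodic angular speed *)

Definition periodic_speed (g : R -> R) : Prop :=
  (forall x, continuity_pt g x) /\ (forall x, 0 < g x) /\ (forall x, g (x + 2 * PI) = g x).

(** [travel_time g x] is the time the flow of [th' = g th] takes from [0] to [x]. *)
Definition travel_time (g : R -> R) (x : R) : R := RInt (fun u => / g u) 0 x.

Lemma travel_time_0 g : travel_time g 0 = 0.
Proof. unfold travel_time. rewrite RInt_point. reflexivity. Qed.

Lemma travel_time_ext (g1 g2 : R -> R) x :
  (forall u, g1 u = g2 u) -> travel_time g1 x = travel_time g2 x.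
Proof. intros E. unfold travel_time. apply RInt_ext. intros u _. rewrite E. reflexivity. Qed.

Section TravelTime.

Variable g : R -> R.
Hypothesis Hg : periodic_speed g.

Let inv_g_continuity_pt x : continuity_pt (fun u => / g u) x.
Proof.
  destruct Hg as [Hc [Hp _]]. apply continuity_pt_inv; [apply Hc | apply Rgt_not_eq, Hp].
Qed.

Lemma travel_time_is_derive x : is_derive (travel_time g) x (/ g x).
Proof.
  apply (is_derive_RInt (fun u => / g u) (travel_time g) 0 x).
  - apply filter_forall. intros b. apply (RInt_correct (V := R_CompleteNormedModule)).
    apply (ex_RInt_continuous (V := R_CompleteNormedModule)). intros z _.
    apply continuity_pt_filterlim, inv_g_continuity_pt.
  - apply continuity_pt_filterlim, inv_g_continuity_pt.
Qed.

Lemma travel_time_continuity_pt x : continuity_pt (travel_time g) x.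
Proof. apply ex_derive_continuity_pt. eexists. apply travel_time_is_derive. Qed.

Lemma travel_time_lt x y : x < y -> travel_time g x < travel_time g y.
Proof.
  apply (is_derive_pos_lt _ (fun u => / g u)); [apply travel_time_is_derive|].
  intros u. apply Rinv_0_lt_compat, Hg.
Qed.

Lemma travel_time_le x y : x <= y -> travel_time g x <= travel_time g y.
Proof. intros [H | ->]; [left; apply travel_time_lt | right]; auto. Qed.

Lemma travel_time_2PI_pos : 0 < travel_time g (2 * PI).
Proof. rewrite <- (travel_time_0 g). apply travel_time_lt. pose proof PI_RGT_0. lra. Qed.

Lemma travel_time_add_2PI x : travel_time g (x + 2 * PI) = travel_time g x + travel_time g (2 * PI).
Proof.
  assert (Hshift : forall u, is_derive (fun v => travel_time g (v + 2 * PI)) u (/ g u)).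
  { intros u. auto_derive; [eexists; apply travel_time_is_derive|].
    rewrite (is_derive_unique _ _ _ (travel_time_is_derive _)), (proj2 (proj2 Hg)). ring. }
  destruct (MVT_gen (fun u => travel_time g (u + 2 * PI) - travel_time g u) 0 x (fun _ => 0))
    as [c [_ Hc]].
  - intros u _. replace 0 with (/ g u - / g u) by ring.
    apply (is_derive_minus (K := R_AbsRing) (V := R_NormedModule));
      [apply Hshift | apply travel_time_is_derive].
  - intros u _. apply continuity_pt_minus; [|apply travel_time_continuity_pt].
    apply ex_derive_continuity_pt. eexists. apply Hshift.
  - rewrite Rplus_0_l, travel_time_0 in Hc. lra.
Qed.

Lemma travel_time_add_mult_2PI x n :
  travel_time g (x + 2 * PI * INR n) = travel_time g x + INR n * travel_time g (2 * PI).
Proof.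
  induction n as [|n IH]; [simpl; rewrite Rmult_0_r, Rplus_0_r; ring|].
  rewrite S_INR. replace (x + 2 * PI * (INR n + 1)) with ((x + 2 * PI * INR n) + 2 * PI) by ring.
  rewrite travel_time_add_2PI, IH. ring.
Qed.

Lemma travel_time_linear_window x : exists a,
  travel_time g a = travel_time g (2 * PI) * a / (2 * PI) /\ a <= x <= a + 2 * PI.
Proof.
  pose proof PI_RGT_0 as HPI.
  assert (E : forall q, 2 * PI * (q / (2 * PI)) = q) by (intros q; field; lra).
  destruct (Rle_lt_dec 0 x) as [Hx | Hx].
  - destruct (nfloor_ex (x / (2 * PI))) as [n [Hn1 Hn2]]; [apply Rdiv_le_0_compat; lra|].
    exists (2 * PI * INR n). split.
    + rewrite <- (Rplus_0_l (2 * PI * INR n)), travel_time_add_mult_2PI, travel_time_0. field. lra.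
    + rewrite <- (E x). set (q := x / (2 * PI)) in *. split; nra.
  - destruct (nfloor_ex (- x / (2 * PI))) as [n [Hn1 Hn2]]; [apply Rdiv_le_0_compat; lra|].
    exists (- (2 * PI * INR (S n))). split.
    + pose proof (travel_time_add_mult_2PI (- (2 * PI * INR (S n))) (S n)) as T.
      rewrite Rplus_opp_l, travel_time_0 in T.
      replace (travel_time g (2 * PI) * - (2 * PI * INR (S n)) / (2 * PI))
        with (- (INR (S n) * travel_time g (2 * PI))) by (field; lra).
      lra.
    + rewrite S_INR. assert (Ex := E (- x)). set (q := - x / (2 * PI)) in *. split; nra.
Qed.

Lemma travel_time_linear_bound x :
  Rabs (travel_time g x - travel_time g (2 * PI) * x / (2 * PI)) <= travel_time g (2 * PI).
Proof.
  destruct (travel_time_linear_window x) as [a [Ha [Hax Hxa]]].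
  pose proof PI_RGT_0. pose proof travel_time_2PI_pos as HP.
  set (P := travel_time g (2 * PI)) in *.
  pose proof (travel_time_le _ _ Hax) as Tax. pose proof (travel_time_le _ _ Hxa) as Txa.
  rewrite travel_time_add_2PI in Txa. fold P in Txa.
  assert (Hq : 0 <= (x - a) / (2 * PI) <= 1).
  { split; [apply Rdiv_le_0_compat; lra|].
    apply Rmult_le_reg_r with (2 * PI); [lra|].
    unfold Rdiv. rewrite Rmult_assoc, Rinv_l by lra. lra. }
  assert (E : P * x / (2 * PI) = P * a / (2 * PI) + P * ((x - a) / (2 * PI))) by (field; lra).
  set (q := (x - a) / (2 * PI)) in *.
  assert (0 <= P * q <= P).
  { split; [apply Rmult_le_pos | rewrite <- (Rmult_1_r P) at 2; apply Rmult_le_compat_l]; lra. }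
  apply Rabs_le. lra.
Qed.

Lemma travel_time_surj t : {x | travel_time g x = t}.
Proof.
  pose proof PI_RGT_0. pose proof travel_time_2PI_pos as HP.
  set (P := travel_time g (2 * PI)) in *.
  destruct (nfloor_ex (Rabs t / P)) as [n [_ Hn]];
    [apply Rdiv_le_0_compat; [apply Rabs_pos | lra]|].
  set (m := INR (S n)).
  assert (Ht : Rabs t < m * P).
  { unfold m. rewrite S_INR. apply (Rmult_lt_reg_r (/ P)); [apply Rinv_0_lt_compat; lra|].
    replace ((INR n + 1) * P * / P) with (INR n + 1) by (field; lra). exact Hn. }
  assert (Hpos : travel_time g (2 * PI * m) = m * P).
  { rewrite <- (Rplus_0_l (2 * PI * m)). unfold m.
    rewrite travel_time_add_mult_2PI, travel_time_0. fold P. ring. }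
  assert (Hneg : travel_time g (- (2 * PI * m)) = - (m * P)).
  { pose proof (travel_time_add_mult_2PI (- (2 * PI * m)) (S n)) as T. fold m in T.
    rewrite Rplus_opp_l, travel_time_0 in T. fold P in T. lra. }
  assert (Hm : 0 < m) by (unfold m; apply lt_0_INR; lia).
  destruct (IVT_gen (travel_time g) (- (2 * PI * m)) (2 * PI * m) t) as [x [_ Hx]].
  - intros z. apply travel_time_continuity_pt.
  - rewrite Hpos, Hneg, Rmin_left, Rmax_right by nra.
    apply Rabs_le_between. lra.
  - exists x. exact Hx.
Qed.

Lemma angle_increment_lt_2PI (th dth : R -> R) :
  1 < travel_time g (2 * PI) -> cont_on01 th ->
  (forall t, 0 < t < 1 -> is_derive th t (dth t) /\ Rabs (dth t) <= g (th t)) ->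
  Rabs (th 1 - th 0) < 2 * PI.
Proof.
  intros HP Hc Hd.
  (* d/dt travel_time g (th t) = dth t / g (th t) lies in [-1, 1] *)
  assert (HL : Rabs (travel_time g (th 1) - travel_time g (th 0)) <= 1).
  { destruct (MVT_cont_on01 (fun t => travel_time g (th t)) (fun t => dth t / g (th t)))
      as [c [Hc1 ->]].
    - apply cont_on01_comp; [apply travel_time_continuity_pt | exact Hc].
    - intros t Ht. apply (is_derive_comp (travel_time g) th t); [apply travel_time_is_derive|].
      apply Hd, Ht.
    - destruct (Hd c Hc1) as [_ Hb]. pose proof (proj1 (proj2 Hg) (th c)).
      unfold Rdiv. rewrite Rabs_mult, Rabs_inv, (Rabs_right (g (th c))) by lra.
      apply (Rmult_le_reg_r (g (th c))); [lra|].
      rewrite Rmult_assoc, Rinv_l by lra. lra. }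
  apply Rabs_le_between' in HL.
  apply Rabs_lt_between'. split; apply Rnot_le_lt; intro Hle.
  - assert (Hmono : travel_time g (th 1 + 2 * PI) <= travel_time g (th 0))
      by (apply travel_time_le; lra).
    rewrite travel_time_add_2PI in Hmono. lra.
  - assert (Hmono : travel_time g (th 0 + 2 * PI) <= travel_time g (th 1))
      by (apply travel_time_le; lra).
    rewrite travel_time_add_2PI in Hmono. lra.
Qed.
Lemma travel_time_flow (sg : R) : exists th : R -> R,
  (forall t, travel_time g (th t) = sg * t) /\ (forall t, is_derive th t (sg * g (th t))).
Proof.
  set (Ti := fun t => proj1_sig (travel_time_surj t)).
  assert (HTi : forall t, travel_time g (Ti t) = t)
    by (intros t; exact (proj2_sig (travel_time_surj t))).
  assert (HdTi : forall t, is_derive Ti t (/ / g (Ti t))).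
  { apply (is_derive_inverse (travel_time g) Ti (fun x => / g x));
      [apply travel_time_is_derive | | exact HTi].
    intros x. apply Rinv_0_lt_compat, Hg. }
  exists (fun t => Ti (sg * t)). split; [intros t; apply HTi|].
  intros t. evar (d : R). replace (sg * g (Ti (sg * t))) with d; subst d.
  - apply (is_derive_comp Ti (fun t => sg * t)); [apply HdTi | auto_derive; auto].
  - rewrite Rinv_inv. change ((sg * 1) * g (Ti (sg * t)) = sg * g (Ti (sg * t))). ring.
Qed.

Lemma travel_time_flow_rate (th : R -> R) (sg : R) :
  (forall t, travel_time g (th t) = sg * t) ->
  is_lim_seq (fun n : nat => (th (INR n) - th 0) / (2 * PI * INR n)) (sg / travel_time g (2 * PI)).
Proof.
  intros Hth.
  pose proof PI_RGT_0. pose proof travel_time_2PI_pos as HP.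
  set (P := travel_time g (2 * PI)) in *.
  assert (Hlin : forall t, Rabs (th t - 2 * PI * sg * t / P) <= 2 * PI).
  { intros t. pose proof (travel_time_linear_bound (th t)) as B. rewrite Hth in B. fold P in B.
    replace (th t - 2 * PI * sg * t / P) with (- (2 * PI / P) * (sg * t - P * th t / (2 * PI)))
      by (field; lra).
    rewrite Rabs_mult, Rabs_Ropp, (Rabs_right (2 * PI / P))
      by (apply Rle_ge, Rdiv_le_0_compat; lra).
    replace (2 * PI) with (2 * PI / P * P) at 3 by (field; lra).
    apply Rmult_le_compat_l; [apply Rdiv_le_0_compat; lra | exact B]. }
  apply (is_lim_seq_of_rate _ _ 2); [lra|]. intros n Hn.
  apply le_INR in Hn. simpl in Hn.
  pose proof (Hlin (INR n)) as B1. pose proof (Hlin 0) as B0.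
  rewrite Rmult_0_r, Rdiv_0_l, Rminus_0_r in B0.
  replace ((th (INR n) - th 0) / (2 * PI * INR n) - sg / P) with
    ((th (INR n) - 2 * PI * sg * INR n / P - th 0) / (2 * PI * INR n)) by (field; lra).
  unfold Rdiv at 1. rewrite Rabs_mult, Rabs_inv, (Rabs_right (2 * PI * INR n)) by nra.
  apply (Rmult_le_reg_r (2 * PI * INR n)); [nra|].
  rewrite Rmult_assoc, Rinv_l, Rmult_1_r by nra.
  replace (2 / INR n * (2 * PI * INR n)) with (2 * PI + 2 * PI) by (field; lra).
  pose proof (Rabs_sub_le_sum (th (INR n) - 2 * PI * sg * INR n / P) (th 0) 0) as T.
  rewrite !Rminus_0_r in T. lra.
Qed.

End TravelTime.

Lemma periodic_speed_abs_add (f : R -> R) dl :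
  (forall x, continuity_pt f x) -> (forall x, f (x + 2 * PI) = f x) ->
  (forall x, 0 < Rabs (f x) + dl) -> periodic_speed (fun u => Rabs (f u) + dl).
Proof.
  intros Hc Hper Hpos. split; [|split; [exact Hpos|]].
  - intros x. apply continuity_pt_plus; [|apply continuity_pt_const; intros ? ?; reflexivity].
    apply (continuity_pt_comp f Rabs); [apply Hc | apply Rcontinuity_abs].
  - intros x. rewrite Hper. reflexivity.
Qed.

Lemma travel_time_perturb_speed (g : R -> R) eps : periodic_speed g -> 0 < eps ->
  exists dl, 0 < dl /\ travel_time g (2 * PI) - eps < travel_time (fun u => g u + dl) (2 * PI).
Proof.
  intros Hg Heps. destruct Hg as [Hc [Hp Hper]].
  pose proof PI_RGT_0.
  destruct (continuity_ab_min g 0 (2 * PI)) as [xm [Hxm _]]; [lra | intros; apply Hc|].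
  set (m := g xm). assert (Hm : 0 < m) by apply Hp.
  set (dl := eps * m ^ 2 / (4 * PI)).
  assert (Hdl : 0 < dl)
    by (unfold dl; apply Rdiv_lt_0_compat; [apply Rmult_lt_0_compat, pow_lt|]; lra).
  exists dl. split; [exact Hdl|].
  assert (Hgd : periodic_speed (fun u => g u + dl)).
  { split; [|split]; intros x.
    - apply continuity_pt_plus; [apply Hc | apply continuity_pt_const; intros ? ?; reflexivity].
    - pose proof (Hp x). lra.
    - rewrite Hper. reflexivity. }
  destruct (MVT_gen (fun x => travel_time g x - travel_time (fun u => g u + dl) x) 0 (2 * PI)
              (fun u => / g u - / (g u + dl))) as [c [Hc1 Hc2]].
  - intros x _. apply (is_derive_minus (K := R_AbsRing) (V := R_NormedModule)).
    + apply travel_time_is_derive. split; auto.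
    + apply (travel_time_is_derive (fun u => g u + dl) Hgd).
  - intros x _. apply continuity_pt_minus.
    + apply travel_time_continuity_pt. split; auto.
    + apply (travel_time_continuity_pt (fun u => g u + dl) Hgd).
  - rewrite !travel_time_0, Rminus_0_r, Rminus_0_r in Hc2.
    rewrite Rmin_left, Rmax_right in Hc1 by lra.
    specialize (Hxm c Hc1). fold m in Hxm. pose proof (Hp c).
    assert (Hb : / g c - / (g c + dl) <= dl / m ^ 2).
    { replace (/ g c - / (g c + dl)) with (dl / (g c * (g c + dl))) by (field; lra).
      apply Rmult_le_compat_l; [lra|]. apply Rinv_le_contravar; [apply pow_lt; lra|].
      simpl. rewrite Rmult_1_r. apply Rmult_le_compat; lra. }
    assert ((/ g c - / (g c + dl)) * (2 * PI) <= dl / m ^ 2 * (2 * PI))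
      by (apply Rmult_le_compat_r; lra).
    assert (dl / m ^ 2 * (2 * PI) = eps / 2) by (unfold dl; field; split; lra).
    lra.
Qed.

Lemma travel_time_log_lower_bound (g : R -> R) a eta L dl :
  periodic_speed g -> 0 < L -> 0 < dl -> 0 < eta ->
  (forall u, a <= u <= a + eta -> g u <= L * (u - a) + dl) ->
  (ln (L * eta + dl) - ln dl) / L <= travel_time g (a + eta) - travel_time g a.
Proof.
  intros Hg HL Hdl Heta Hle.
  set (K := fun x => ln (L * (x - a) + dl) / L).
  assert (HK : forall u, a <= u -> is_derive K u (/ (L * (u - a) + dl))).
  { intros u Hu. assert (0 <= L * (u - a)) by (apply Rmult_le_pos; lra).
    unfold K. auto_derive; [lra|]. field. lra. }
  destruct (MVT_gen (fun x => travel_time g x - K x) a (a + eta)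
              (fun u => / g u - / (L * (u - a) + dl))) as [c [Hc1 Hc2]].
  - intros x Hx. rewrite Rmin_left in Hx by lra.
    apply (is_derive_minus (K := R_AbsRing) (V := R_NormedModule));
      [apply travel_time_is_derive, Hg | apply HK; lra].
  - intros x Hx. rewrite Rmin_left in Hx by lra.
    apply continuity_pt_minus; [apply travel_time_continuity_pt, Hg|].
    apply ex_derive_continuity_pt. eexists. apply HK. lra.
  - rewrite Rmin_left, Rmax_right in Hc1 by lra.
    assert (Hgc : 0 < g c) by apply Hg.
    assert (/ (L * (c - a) + dl) <= / g c)
      by (apply Rinv_le_contravar; [exact Hgc | apply Hle, Hc1]).
    assert (0 <= (/ g c - / (L * (c - a) + dl)) * (a + eta - a)) by (apply Rmult_le_pos; lra).
    unfold K in Hc2. replace (a + eta - a) with eta in Hc2 by ring.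
    replace (a - a) with 0 in Hc2 by ring. rewrite Rmult_0_r, Rplus_0_l in Hc2.
    unfold Rdiv in *. lra.
Qed.

Lemma travel_time_gt_1_of_root (f : R -> R) a L eta :
  (forall x, continuity_pt f x) -> (forall x, f (x + 2 * PI) = f x) -> 0 < L -> 0 < eta <= 1 ->
  (forall u, a <= u <= a + eta -> Rabs (f u) <= L * (u - a)) ->
  exists dl, 0 < dl /\ 1 < travel_time (fun u => Rabs (f u) + dl) (2 * PI).
Proof.
  intros Hc Hper HL Heta Hlin.
  (* dl = L eta / e^L makes (ln (L eta) - ln dl) / L = 1, below the logarithmic lower bound *)
  set (dl := L * eta / exp L).
  assert (Hdl : 0 < dl) by (apply Rdiv_lt_0_compat; [apply Rmult_lt_0_compat | apply exp_pos]; lra).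
  exists dl. split; [exact Hdl|].
  set (g := fun u => Rabs (f u) + dl).
  assert (Hg : periodic_speed g).
  { apply periodic_speed_abs_add; auto. intros x. pose proof (Rabs_pos (f x)). lra. }
  assert (Hlog := travel_time_log_lower_bound g a eta L dl Hg HL Hdl (proj1 Heta)
                    ltac:(intros u Hu; unfold g; specialize (Hlin u Hu); lra)).
  assert (Hmono : travel_time g (a + eta) <= travel_time g (a + 2 * PI))
    by (apply travel_time_le; [exact Hg | pose proof PI2_1; lra]).
  rewrite travel_time_add_2PI in Hmono by exact Hg.
  assert (Hln : ln (L * eta) < ln (L * eta + dl))
    by (apply ln_increasing; [apply Rmult_lt_0_compat|]; lra).
  replace (L * eta) with (dl * exp L) in Hln at 1 by (unfold dl; field; apply Rgt_not_eq, exp_pos).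
  rewrite ln_mult, ln_exp in Hln by (auto; apply exp_pos).
  assert (1 < (ln (L * eta + dl) - ln dl) / L).
  { apply (Rmult_lt_reg_r L); [exact HL|]. unfold Rdiv. rewrite Rmult_assoc, Rinv_l; lra. }
  lra.
Qed.

(** * The boundary flow *)

Definition circle_derive (F : R -> R -> R -> R) (th : R) : R :=
  d_x F 0 (cos th) (sin th) * (- sin th) + d_y F 0 (cos th) (sin th) * cos th.

Lemma circle_derive_correct (F : R -> R -> R -> R) th : Ck3 1 F ->
  is_derive (fun u => F 0 (cos u) (sin u)) th (circle_derive F th).
Proof. intros HF. apply is_derive_on_circle, Ck3_1_differentiable, HF. Qed.

(** Since [H] vanishes on the unit circle, [X_H] is tangent to it and [boundary_speed H th]
    is the angular velocity of [X_{H^0}] at [e^{i th}] (see [boundary_flow_trajectory]). *)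
Definition boundary_speed (H : R -> R -> R -> R) (th : R) : R :=
  - (cos th * d_x H 0 (cos th) (sin th) + sin th * d_y H 0 (cos th) (sin th)).

Definition boundary_speed_derive (H : R -> R -> R -> R) (th : R) : R :=
  - (- sin th * d_x H 0 (cos th) (sin th) + cos th * circle_derive (d_x H) th
     + cos th * d_y H 0 (cos th) (sin th) + sin th * circle_derive (d_y H) th).

Section BoundarySpeed.

Variable H : R -> R -> R -> R.
Hypothesis HC : Ck3 2 H.

Lemma boundary_speed_is_derive th : is_derive (boundary_speed H) th (boundary_speed_derive H th).
Proof.
  destruct HC as [_ [_ [_ [Hx Hy]]]].
  assert (Hcomb : forall (A B : R -> R) a b, is_derive A th a -> is_derive B th b ->
    is_derive (fun u => - (cos u * A u + sin u * B u)) th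
      (- (- sin th * A th + cos th * a + cos th * B th + sin th * b))).
  { intros A B a b HA HB. auto_derive; [repeat split; eexists; eassumption|].
    replace (Derive (fun x => A x) th) with a by (symmetry; apply is_derive_unique, HA).
    replace (Derive (fun x => B x) th) with b by (symmetry; apply is_derive_unique, HB). ring. }
  apply Hcomb; apply circle_derive_correct; assumption.
Qed.

Lemma boundary_speed_continuity_pt th : continuity_pt (boundary_speed H) th.
Proof. apply ex_derive_continuity_pt. eexists. apply boundary_speed_is_derive. Qed.

Lemma boundary_speed_derive_continuity_pt th : continuity_pt (boundary_speed_derive H) th.
Proof.
  destruct HC as [_ [_ [_ [[Hx0 [_ [_ [Hxx Hxy]]]] [Hy0 [_ [_ [Hyx Hyy]]]]]]]].
  unfold boundary_speed_derive, circle_derive.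
  repeat first [ apply continuity_pt_opp | apply continuity_pt_plus | apply continuity_pt_mult
               | apply continuity_sin | apply continuity_cos
               | apply continuity_pt_on_circle; assumption ].
Qed.

End BoundarySpeed.

Lemma boundary_speed_add_2PI H th : boundary_speed H (th + 2 * PI) = boundary_speed H th.
Proof.
  unfold boundary_speed.
  rewrite cos_plus, sin_plus, cos_2PI, sin_2PI, !Rmult_1_r, !Rmult_0_r, Rminus_0_r, Rplus_0_r.
  reflexivity.
Qed.

Lemma boundary_gradient_normal H th : Ck3 1 H -> (forall t x y, rad x y = 1 -> H t x y = 0) ->
  - sin th * d_x H 0 (cos th) (sin th) + cos th * d_y H 0 (cos th) (sin th) = 0.
Proof.
  intros HC Hbd.
  assert (Hzero : is_derive (fun s => H 0 (cos s) (sin s)) th 0).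
  { apply (is_derive_ext (fun _ => 0)); [intros u; symmetry; apply Hbd, rad_circle|].
    apply (is_derive_const (K := R_AbsRing) (V := R_NormedModule)). }
  pose proof (is_derive_unique _ _ _ (circle_derive_correct H th HC)) as E.
  rewrite (is_derive_unique _ _ _ Hzero) in E. unfold circle_derive in E. lra.
Qed.

Lemma gradient_on_circle_autonomous H :
  (forall t s x y, rad x y = 1 -> XH1 H t x y = XH1 H s x y /\ XH2 H t x y = XH2 H s x y) ->
  forall t a, d_x H t (cos a) (sin a) = d_x H 0 (cos a) (sin a) /\
              d_y H t (cos a) (sin a) = d_y H 0 (cos a) (sin a).
Proof.
  intros Haut t a. destruct (Haut t 0 (cos a) (sin a) (rad_circle a)) as [A1 A2].
  unfold XH1, XH2 in A1, A2. split; lra.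
Qed.

Lemma boundary_flow_trajectory H (th : R -> R) :
  Ck3 1 H -> (forall t x y, rad x y = 1 -> H t x y = 0) ->
  (forall t a, d_x H t (cos a) (sin a) = d_x H 0 (cos a) (sin a) /\
               d_y H t (cos a) (sin a) = d_y H 0 (cos a) (sin a)) ->
  (forall t, is_derive th t (boundary_speed H (th t))) ->
  forall t, is_derive (fun s => cos (th s)) t (XH1 H t (cos (th t)) (sin (th t))) /\
            is_derive (fun s => sin (th s)) t (XH2 H t (cos (th t)) (sin (th t))).
Proof.
  intros HC Hbd Haut Hth t.
  destruct (Haut t (th t)) as [A1 A2]. unfold XH1, XH2. rewrite A1, A2.
  pose proof (boundary_gradient_normal H (th t) HC Hbd) as Hn.
  pose proof (sin2_cos2 (th t)) as Hcs. unfold Rsqr in Hcs.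
  pose proof (is_derive_comp cos th t _ _ (is_derive_cos (th t)) (Hth t)) as Dc.
  pose proof (is_derive_comp sin th t _ _ (is_derive_sin (th t)) (Hth t)) as Ds.
  unfold boundary_speed in Dc, Ds.
  set (c := cos (th t)) in *. set (s := sin (th t)) in *.
  set (Ax := d_x H 0 c s) in *. set (Ay := d_y H 0 c s) in *.
  split.
  - replace Ay with (- (c * Ax + s * Ay) * - s); [exact Dc|].
    transitivity (c * (s * Ax - c * Ay) + Ay * (s * s + c * c)); [ring|].
    rewrite Hcs. replace (s * Ax - c * Ay) with 0 by lra. ring.
  - replace (- Ax) with (- (c * Ax + s * Ay) * c); [exact Ds|].
    transitivity (- s * (- s * Ax + c * Ay) - Ax * (s * s + c * c)); [ring|].
    rewrite Hcs, Hn. ring.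
Qed.

Lemma boundary_speed_abs_add_periodic_speed H dl : Ck3 2 H -> 0 < dl ->
  periodic_speed (fun u => Rabs (boundary_speed H u) + dl).
Proof.
  intros HC Hdl. apply periodic_speed_abs_add.
  - intros x. apply boundary_speed_continuity_pt, HC.
  - apply boundary_speed_add_2PI.
  - intros x. pose proof (Rabs_pos (boundary_speed H x)). lra.
Qed.

Section BoundaryRotation.

Variable H : R -> R -> R -> R.
Hypothesis HC : Ck3 2 H.
Hypothesis H_bd : forall t x y, rad x y = 1 -> H t x y = 0.
Hypothesis H_aut : forall t a, d_x H t (cos a) (sin a) = d_x H 0 (cos a) (sin a) /\
                               d_y H t (cos a) (sin a) = d_y H 0 (cos a) (sin a).
Hypothesis H_rot : exists r, is_boundary_rotation_number H r /\ Rabs r < 1.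

Let Hspeed_cont x : continuity_pt (boundary_speed H) x.
Proof. apply boundary_speed_continuity_pt, HC. Qed.

Let abs_speed_periodic : (forall th, boundary_speed H th <> 0) ->
  periodic_speed (fun u => Rabs (boundary_speed H u) + 0).
Proof.
  intros Hnz. apply periodic_speed_abs_add; [exact Hspeed_cont | apply boundary_speed_add_2PI|].
  intros x. rewrite Rplus_0_r. apply Rabs_pos_lt, Hnz.
Qed.

Lemma boundary_period_gt_1 : (forall th, boundary_speed H th <> 0) ->
  1 < travel_time (fun u => Rabs (boundary_speed H u) + 0) (2 * PI).
Proof.
  intros Hnz. destruct H_rot as [r [Hr Hr1]].
  set (g := fun u => Rabs (boundary_speed H u) + 0).
  assert (Hg : periodic_speed g) by exact (abs_speed_periodic Hnz).
  assert (Hsg : exists sg, Rabs sg = 1 /\ forall th, boundary_speed H th = sg * g th).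
  { unfold g. destruct (sign_constant _ Hspeed_cont Hnz) as [Hp | Hn].
    - exists 1. rewrite Rabs_R1. split; [reflexivity|]. intros th.
      rewrite Rabs_right by (apply Rle_ge, Rlt_le, Hp). ring.
    - exists (-1). split; [rewrite Rabs_left; lra|]. intros th.
      rewrite Rabs_left by apply Hn. ring. }
  destruct Hsg as [sg [Hsg1 Hsg2]].
  (* the boundary flow turns by 2 PI in time P, so its rotation number is sg / P *)
  destruct (travel_time_flow g Hg sg) as [th [HT Hd]].
  assert (Hflow : forall t, is_derive th t (boundary_speed H (th t)))
    by (intros t; rewrite Hsg2; apply Hd).
  assert (Hlim := Hr (fun t => cos (th t)) (fun t => sin (th t)) th
    (boundary_flow_trajectory H th (Ck3_pred 1 H HC) H_bd H_aut Hflow)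
    (fun t => ex_derive_continuous th t (ex_intro _ _ (Hflow t)))
    (fun t => conj eq_refl eq_refl)).
  assert (Hlim' := travel_time_flow_rate g Hg th sg HT).
  apply is_lim_seq_unique in Hlim, Hlim'. rewrite Hlim' in Hlim. injection Hlim as <-.
  pose proof (travel_time_2PI_pos g Hg) as HP. set (P := travel_time g (2 * PI)) in *.
  replace (Rabs (sg / P)) with (/ P) in Hr1
    by (unfold Rdiv; rewrite Rabs_mult, Hsg1, Rabs_inv, Rabs_right; lra).
  apply Rnot_le_lt. intros HP1.
  apply Rinv_le_contravar in HP1; [|exact HP]. rewrite Rinv_1 in HP1. lra.
Qed.

Lemma boundary_speed_margin :
  exists dl, 0 < dl /\ 1 < travel_time (fun u => Rabs (boundary_speed H u) + dl) (2 * PI).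
Proof.
  destruct (classic (exists th0, boundary_speed H th0 = 0)) as [[th0 Hz] | Hnz].
  - destruct (Rabs_le_linear_near_root _ _ th0 (boundary_speed_is_derive H HC)
                (boundary_speed_derive_continuity_pt H HC th0) Hz) as [L [eta [HL [Heta Hlin]]]].
    exact (travel_time_gt_1_of_root _ th0 L eta Hspeed_cont (boundary_speed_add_2PI H)
             HL Heta Hlin).
  - assert (Hnz' : forall th, boundary_speed H th <> 0)
      by (intros th E; apply Hnz; exists th; exact E).
    set (g := fun u => Rabs (boundary_speed H u) + 0).
    pose proof (boundary_period_gt_1 Hnz') as HP. fold g in HP.
    destruct (travel_time_perturb_speed g (travel_time g (2 * PI) - 1) (abs_speed_periodic Hnz')
                ltac:(lra)) as [dl [Hdl Hlt]].
    exists dl. split; [exact Hdl|].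
    rewrite (travel_time_ext _ (fun u => g u + dl)) by (intros u; unfold g; ring). lra.
Qed.

End BoundaryRotation.

(** * Trajectories of [Hn] outside the disc *)

Definition radial_factor (rh : R -> R) (r : R) : R := (1 + rh (r - 1)) / r.

Lemma Hn_scaled (rh : R -> R) H t x y : (forall r, r <= 0 -> rh r = r) -> 0 < rad x y ->
  Hn rh H t x y = H t (radial_factor rh (rad x y) * x) (radial_factor rh (rad x y) * y).
Proof.
  intros Hid Hr. unfold Hn, radial_factor. destruct (Rle_dec (rad x y) 1); [|reflexivity].
  rewrite Hid by lra. replace ((1 + (rad x y - 1)) / rad x y) with 1 by (field; lra).
  rewrite !Rmult_1_l. reflexivity.
Qed.

Lemma is_derive_radial_factor (rh : R -> R) r : (forall z, ex_derive rh z) -> 0 < r ->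
  is_derive (radial_factor rh) r ((Derive rh (r - 1) * r - (1 + rh (r - 1))) / r ^ 2).
Proof.
  intros Hd Hr. unfold radial_factor. auto_derive.
  - repeat split; [apply Hd | lra].
  - replace (r + - (1)) with (r - 1) by ring. change (fun x => rh x) with rh. field. lra.
Qed.

Section ScaledPartials.

Variables (G : R -> R -> R) (phi : R -> R) (X Y gx gy dphi : R).
Hypothesis HG : differentiable_pt_lim G (phi (rad X Y) * X) (phi (rad X Y) * Y) gx gy.
Hypothesis Hphi : is_derive phi (rad X Y) dphi.
Hypothesis Hr : 0 < rad X Y.

Lemma is_derive_scaled_x :
  is_derive (fun s => G (phi (rad s Y) * s) (phi (rad s Y) * Y)) X
    (gx * (dphi * (X / rad X Y) * X + phi (rad X Y)) + gy * (dphi * (X / rad X Y) * Y)).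
Proof.
  pose proof (is_derive_rad_x X Y Hr) as Hrad.
  apply is_derive_Reals, (derivable_pt_lim_comp_2d G); [exact HG | |];
    apply is_derive_Reals; auto_derive; try (repeat split; eexists; eassumption);
    rewrite (is_derive_unique (fun x : R => rad x Y) X _ Hrad),
      (is_derive_unique (fun x : R => phi x) _ _ Hphi); ring.
Qed.

Lemma is_derive_scaled_y :
  is_derive (fun s => G (phi (rad X s) * X) (phi (rad X s) * s)) Y
    (gx * (dphi * (Y / rad X Y) * X) + gy * (dphi * (Y / rad X Y) * Y + phi (rad X Y))).
Proof.
  pose proof (is_derive_rad_y X Y Hr) as Hrad.
  apply is_derive_Reals, (derivable_pt_lim_comp_2d G); [exact HG | |];
    apply is_derive_Reals; auto_derive; try (repeat split; eexists; eassumption);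
    rewrite (is_derive_unique (fun x : R => rad X x) Y _ Hrad),
      (is_derive_unique (fun x : R => phi x) _ _ Hphi); ring.
Qed.

End ScaledPartials.

Lemma Hn_radial_derivative (rh : R -> R) H t X Y :
  Ck3 1 H -> (forall z, ex_derive rh z) -> (forall r, r <= 0 -> rh r = r) -> 1 <= rad X Y ->
  X * d_x (Hn rh H) t X Y + Y * d_y (Hn rh H) t X Y =
  Derive rh (rad X Y - 1) *
    (X * d_x H t (radial_factor rh (rad X Y) * X) (radial_factor rh (rad X Y) * Y) +
     Y * d_y H t (radial_factor rh (rad X Y) * X) (radial_factor rh (rad X Y) * Y)).
Proof.
  intros HC Hd Hid HR.
  assert (Hr : 0 < rad X Y) by lra.
  set (r := rad X Y) in *. set (c := radial_factor rh r).
  set (gx := d_x H t (c * X) (c * Y)). set (gy := d_y H t (c * X) (c * Y)).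
  set (dphi := (Derive rh (r - 1) * r - (1 + rh (r - 1))) / r ^ 2).
  assert (Hphi : is_derive (radial_factor rh) r dphi) by (apply is_derive_radial_factor; auto).
  assert (HG := Ck3_1_differentiable H t (c * X) (c * Y) HC).
  assert (Ex : d_x (Hn rh H) t X Y = gx * (dphi * (X / r) * X + c) + gy * (dphi * (X / r) * Y)).
  { unfold d_x. apply is_derive_unique.
    eapply is_derive_ext_loc; [|exact (is_derive_scaled_x (H t) _ X Y gx gy dphi HG Hphi Hr)].
    exists (mkposreal (1 / 2) ltac:(lra)). intros s Hs. symmetry.
    apply Hn_scaled; [exact Hid | apply (rad_pos_of_near X Y s HR Hs)]. }
  assert (Ey : d_y (Hn rh H) t X Y = gx * (dphi * (Y / r) * X) + gy * (dphi * (Y / r) * Y + c)).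
  { unfold d_y. apply is_derive_unique.
    eapply is_derive_ext_loc; [|exact (is_derive_scaled_y (H t) _ X Y gx gy dphi HG Hphi Hr)].
    exists (mkposreal (1 / 2) ltac:(lra)). intros s Hs. symmetry.
    apply Hn_scaled; [exact Hid|]. rewrite rad_comm.
    apply (rad_pos_of_near Y X s); [rewrite rad_comm; exact HR | exact Hs]. }
  rewrite Ex, Ey.
  transitivity ((X * gx + Y * gy) * (dphi * (X ^ 2 + Y ^ 2) / r + c)); [field; lra|].
  rewrite <- rad_sqr. fold r. unfold dphi, c, radial_factor. field. lra.
Qed.

Lemma radial_combination_le (c s gx gy hx hy : R) : Rabs c <= 1 -> Rabs s <= 1 ->
  Rabs (c * gx + s * gy) <= Rabs (c * hx + s * hy) + Rabs (gx - hx) + Rabs (gy - hy).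
Proof.
  intros Hc Hs.
  replace (c * gx + s * gy) with ((c * hx + s * hy) + (c * (gx - hx) + s * (gy - hy))) by ring.
  eapply Rle_trans; [apply Rabs_triang|]. rewrite Rplus_assoc. apply Rplus_le_compat_l.
  eapply Rle_trans; [apply Rabs_triang|]. rewrite !Rabs_mult.
  pose proof (Rabs_pos (gx - hx)). pose proof (Rabs_pos (gy - hy)).
  apply Rplus_le_compat; [rewrite <- (Rmult_1_l (Rabs (gx - hx))) at 2
                         | rewrite <- (Rmult_1_l (Rabs (gy - hy))) at 2];
    apply Rmult_le_compat_r; assumption.
Qed.

Lemma gradient_near_circle H eps : Ck3 1 H -> 0 < eps ->
  exists eta, 0 < eta /\ forall t a x y, 0 <= t <= 1 ->
    Rabs (x - cos a) < eta -> Rabs (y - sin a) < eta ->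
    Rabs (d_x H t x y - d_x H t (cos a) (sin a)) < eps /\
    Rabs (d_y H t x y - d_y H t (cos a) (sin a)) < eps.
Proof.
  intros [_ [_ [_ [Hx Hy]]]] Heps.
  destruct (continuous3_unif_cube _ (-1) 1 eps Hx Heps) as [e1 [He1 U1]].
  destruct (continuous3_unif_cube _ (-1) 1 eps Hy Heps) as [e2 [He2 U2]].
  exists (Rmin e1 e2). split; [apply Rmin_pos; assumption|].
  intros t a x y Ht Hxa Hya.
  pose proof (Rmin_l e1 e2). pose proof (Rmin_r e1 e2).
  pose proof (COS_bound a). pose proof (SIN_bound a).
  assert (Htt : Rabs (t - t) = 0) by (rewrite Rminus_diag; apply Rabs_R0).
  split; [apply U1 | apply U2]; lra.
Qed.

Section HnTrajectories.

Variables (H : R -> R -> R -> R) (rh : R -> R) (eta dl : R).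
Hypothesis HC : Ck3 2 H.
Hypothesis H_aut : forall t a, d_x H t (cos a) (sin a) = d_x H 0 (cos a) (sin a) /\
                               d_y H t (cos a) (sin a) = d_y H 0 (cos a) (sin a).
Hypothesis H_near : forall t a x y, 0 <= t <= 1 ->
  Rabs (x - cos a) < eta -> Rabs (y - sin a) < eta ->
  Rabs (d_x H t x y - d_x H t (cos a) (sin a)) < dl / 2 /\
  Rabs (d_y H t x y - d_y H t (cos a) (sin a)) < dl / 2.
Hypothesis rh_derive : forall z, ex_derive rh z.
Hypothesis rh_id : forall r, r <= 0 -> rh r = r.
Hypothesis rh_small : forall r, 0 <= r -> 0 <= rh r < eta /\ Rabs (Derive rh r) <= 1.

Lemma Hn_angular_velocity_eq t X Y a :
  1 <= rad X Y -> X = rad X Y * cos a -> Y = rad X Y * sin a ->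
  let s := 1 + rh (rad X Y - 1) in
  angular_velocity (Hn rh H) t X Y =
  - Derive rh (rad X Y - 1) *
      (cos a * d_x H t (s * cos a) (s * sin a) + sin a * d_y H t (s * cos a) (s * sin a)) / rad X Y.
Proof.
  intros HR EX EY s.
  unfold angular_velocity, XH1, XH2.
  replace (X * - d_x (Hn rh H) t X Y - Y * d_y (Hn rh H) t X Y)
    with (- (X * d_x (Hn rh H) t X Y + Y * d_y (Hn rh H) t X Y)) by ring.
  rewrite Hn_radial_derivative by (auto; apply Ck3_pred, HC).
  assert (Hs : radial_factor rh (rad X Y) * rad X Y = s) by (unfold radial_factor, s; field; lra).
  assert (HsX : radial_factor rh (rad X Y) * X = s * cos a).
  { rewrite <- Hs, Rmult_assoc, <- EX. reflexivity. }
  assert (HsY : radial_factor rh (rad X Y) * Y = s * sin a).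
  { rewrite <- Hs, Rmult_assoc, <- EY. reflexivity. }
  rewrite HsX, HsY. set (r := rad X Y) in *. rewrite EX at 1. rewrite EY at 1. field. lra.
Qed.

Lemma Hn_angular_velocity_le t X Y a : 0 <= t <= 1 ->
  1 <= rad X Y -> X = rad X Y * cos a -> Y = rad X Y * sin a ->
  Rabs (angular_velocity (Hn rh H) t X Y) <= Rabs (boundary_speed H a) + dl.
Proof.
  intros Ht HR EX EY.
  rewrite (Hn_angular_velocity_eq t X Y a HR EX EY).
  set (r := rad X Y) in *. set (s := 1 + rh (r - 1)).
  destruct (rh_small (r - 1) ltac:(lra)) as [[Hr0 Hr1] Hr2].
  pose proof (COS_bound a). pose proof (SIN_bound a).
  assert (Hc1 : Rabs (cos a) <= 1) by (apply Rabs_le; lra).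
  assert (Hs1 : Rabs (sin a) <= 1) by (apply Rabs_le; lra).
  (* the scaled point s e^{ia} lies within rh (r - 1) < eta of e^{ia} *)
  assert (Hnear_pt : forall z, Rabs z <= 1 -> Rabs (s * z - z) < eta).
  { intros z Hz. replace (s * z - z) with (rh (r - 1) * z) by (unfold s; ring).
    rewrite Rabs_mult, (Rabs_right (rh (r - 1))) by lra.
    apply Rle_lt_trans with (rh (r - 1) * 1); [apply Rmult_le_compat_l|]; lra. }
  destruct (H_near t a (s * cos a) (s * sin a) Ht (Hnear_pt _ Hc1) (Hnear_pt _ Hs1)) as [U1 U2].
  set (gx := d_x H t (s * cos a) (s * sin a)) in *.
  set (gy := d_y H t (s * cos a) (s * sin a)) in *.
  assert (Hf : Rabs (boundary_speed H a) =
               Rabs (cos a * d_x H t (cos a) (sin a) + sin a * d_y H t (cos a) (sin a))).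
  { unfold boundary_speed.
    rewrite Rabs_Ropp, (proj1 (H_aut t a)), (proj2 (H_aut t a)). reflexivity. }
  pose proof (radial_combination_le _ _ gx gy (d_x H t (cos a) (sin a)) (d_y H t (cos a) (sin a))
                Hc1 Hs1) as B.
  rewrite <- Hf in B.
  apply Rle_trans with (Rabs (cos a * gx + sin a * gy)); [|lra].
  unfold Rdiv. rewrite Rabs_mult, Rabs_mult, Rabs_Ropp, Rabs_inv, (Rabs_right r) by lra.
  apply (Rmult_le_reg_r r); [lra|]. rewrite Rmult_assoc, Rinv_l, Rmult_1_r by lra.
  pose proof (Rabs_pos (cos a * gx + sin a * gy)).
  apply Rle_trans with (1 * Rabs (cos a * gx + sin a * gy)); [apply Rmult_le_compat_r; lra | nra].
Qed.

Lemma Hn_trajectory_angle_increment_lt_2PI (x1 x2 th : R -> R) :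
  1 < travel_time (fun u => Rabs (boundary_speed H u) + dl) (2 * PI) -> 0 < dl ->
  trajectory01 (Hn rh H) x1 x2 -> (forall t, 0 <= t <= 1 -> 1 <= rad (x1 t) (x2 t)) ->
  cont_on01 th ->
  (forall t, 0 <= t <= 1 ->
     x1 t = rad (x1 t) (x2 t) * cos (th t) /\ x2 t = rad (x1 t) (x2 t) * sin (th t)) ->
  Rabs (th 1 - th 0) < 2 * PI.
Proof.
  intros HP Hdl Htraj Hrad Hth Hrep.
  apply (angle_increment_lt_2PI _ (boundary_speed_abs_add_periodic_speed H dl HC Hdl) th
           (fun t => angular_velocity (Hn rh H) t (x1 t) (x2 t)) HP Hth).
  intros t Ht. split.
  - apply (trajectory_angle_is_derive _ x1 x2 th Htraj); try assumption.
    intros s Hs. specialize (Hrad s Hs). lra.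
  - destruct (Hrep t ltac:(lra)) as [E1 E2].
    apply Hn_angular_velocity_le; [lra | apply Hrad; lra | exact E1 | exact E2].
Qed.

End HnTrajectories.

Theorem lemma4p2
  (H : R -> R -> R -> R) (rho : nat -> R -> R)
  (H_smooth : smooth3 H)
  (H_per : forall t x y, H (t + 1) x y = H t x y)
  (H_bd : forall t x y, rad x y = 1 -> H t x y = 0)
  (X_bd_aut : forall t s x y, rad x y = 1 ->
      XH1 H t x y = XH1 H s x y /\ XH2 H t x y = XH2 H s x y)
  (H_rot : exists r, is_boundary_rotation_number H r /\ Rabs r < 1)
  (rho_smooth : forall n, (1 <= n)%nat -> smooth1 (rho n))
  (rho_id : forall n r, (1 <= n)%nat -> r <= 0 -> rho n r = r)
  (rho_zero : forall n r, (1 <= n)%nat -> / INR n <= r -> rho n r = 0)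
  (rho_nonneg : forall n r, (1 <= n)%nat -> 0 <= r -> 0 <= rho n r)
  (rho_lip : forall n r, (1 <= n)%nat -> 0 <= r -> Rabs (Derive (rho n) r) <= 1)
  (rho_small : forall n r, (1 <= n)%nat -> 0 <= r -> Rabs (rho n r) <= / INR n)
  (rho_der : forall n r, (1 <= n)%nat -> - / INR n <= Derive (rho n) r) :
  exists N : nat, forall n : nat, (N <= n)%nat ->
    forall x1 x2 : R -> R,
      trajectory01 (Hn (rho n) H) x1 x2 ->
      (forall t, 0 <= t <= 1 -> 1 <= rad (x1 t) (x2 t)) ->
      forall w, is_wind x1 x2 w -> Rabs w < 1.
Proof.
  pose proof (gradient_on_circle_autonomous H X_bd_aut) as H_aut.
  destruct (boundary_speed_margin H (H_smooth 2%nat) H_bd H_aut H_rot) as [dl [Hdl HP]].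
  destruct (gradient_near_circle H (dl / 2) (H_smooth 1%nat) ltac:(lra)) as [eta [Heta Hnear]].
  destruct (eventually_inv_INR_lt eta Heta) as [N HN].
  exists N. intros n HnN x1 x2 Htraj Hrad w [th [Hth [Hrep ->]]].
  destruct (HN n HnN) as [Hn1 Hinv].
  assert (Hrho : forall r, 0 <= r -> 0 <= rho n r < eta /\ Rabs (Derive (rho n) r) <= 1).
  { intros r Hr. pose proof (rho_small n r Hn1 Hr). pose proof (Rle_abs (rho n r)).
    repeat split; [apply rho_nonneg | lra | apply rho_lip]; assumption. }
  apply Rabs_div_2PI_lt_1.
  exact (Hn_trajectory_angle_increment_lt_2PI H (rho n) eta dl (H_smooth 2%nat) H_aut Hnear
           (rho_smooth n Hn1 1%nat) (fun r => rho_id n r Hn1) Hrho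
           x1 x2 th HP Hdl Htraj Hrad Hth Hrep).
Qed.
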